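(* Assume $n\ge 3$. Consider finite compositions of the rotation-only operations $h_1(\varphi_1),\dots,h_{m-1}(\varphi_{m-1})$ and $f_m(\varphi_m)$ with real arguments (each occurrence of $h_i$, $f_m$ may be used any number of times). (a) Any such composition leaves all robot positions unchanged, and the vector of net orientation changes $(\Delta\theta_1,\dots,\Delta\theta_n)$ equals $A u \bmod 2\pi$, where $u\in\mathbb R^m$ has $u_i$ equal to the sum of the arguments of all occurrences of $h_i$ ($i<m$), resp. $f_m$ ($i=m$), and $A$ is the $n\times m$ matrix with $A_{j,i}=1-\alpha_{i,j}$ for $i<m$ and $A_{j,m}=1$. (b) For any three distinct robots $j_1,j_2,j_3$ and any target orientations $\beta_1,\beta_2,\beta_3$, there is such a composition after which robot $j_s$ has orientation $\beta_s$ (mod $2\pi$) for $s=1,2,3$. (c) Since $\operatorname{rank}A\le m$, for any set $S$ of more than $m$ robots there exist target orientations for the robots in $S$ that cannot be attained simultaneously by any such composition.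
   Context: A swarm of $n$ planar robots; robot $j$ has state $(x_j,y_j,\theta_j)$, $\theta_j$ mod $2\pi$; all robots have the same turning radius $r>0$. Groups $G_1,\dots,G_m$ with activation vectors $\alpha_i\in\{0,1\}^n$ ($\alpha_{i,j}=1$ iff robot $j\in G_i$); the patterns $(\alpha_{1,j},\dots,\alpha_{m-1,j})$, $j=1,\dots,n$, are pairwise distinct, none all zeros, none all ones; $G_m=\emptyset$. Dynamics: one group $\nu(t)$ active at a time, input $u(t)>0$; with $a_j=\alpha_{\nu(t),j}$: $\dot x_j=a_j\cos\theta_j u$, $\dot y_j=a_j\sin\theta_j u$, $\dot\theta_j=(1-a_j)u/r$. $f_m(\varphi)$ ($\varphi>0$) = activate $G_m$ with $\int u\,dt=r\varphi$, rotating every robot in place by $\varphi$; for real $\varphi$ it is interpreted mod $2\pi$ (as $f_m$ of a positive representative). $h_i(\varphi)$ ($i<m$, $\varphi\in\mathbb R$): an activation sequence (which exists) whose net effect leaves members of $G_i$ unchanged and keeps non-members in place with orientation increased by $\varphi$ mod $2\pi$. *)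

From HB Require Import structures.
From mathcomp Require Import all_boot all_order all_algebra.
From mathcomp Require Import all_classical all_reals all_analysis.
Set Implicit Arguments. Unset Strict Implicit. Unset Printing Implicit Defensive.
Import Order.TTheory GRing.Theory Num.Theory.
Local Open Scope ring_scope.

Section Robots.
Variables (R : realType) (n : nat).

(* State of the swarm: positions (x_j, y_j) and orientations theta_j (real
   representatives; orientations are compared modulo 2*pi). *)
Record state := State { sx : 'I_n -> R; sy : 'I_n -> R; sth : 'I_n -> R }.

Definition eqmod2pi (a b : R) : Prop := exists z : int, a = b + z%:~R * (2 * pi).

(* Net effect of activating the group with indicator a : 'I_n -> bool with
   total input  int u dt = s  (s > 0), obtained by integrating the dynamics
   x' = a cos(th) u, y' = a sin(th) u, th' = (1-a) u / r :
   active robots keep their heading and move straight by s,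
   inactive robots stay in place and turn by s / r. *)
Definition activate (r : R) (a : 'I_n -> bool) (s : R) (st : state) : state :=
  State (fun j => sx st j + (a j)%:R * cos (sth st j) * s)
        (fun j => sy st j + (a j)%:R * sin (sth st j) * s)
        (fun j => sth st j + (1 - (a j)%:R) * s / r).

(* positive representative of phi modulo 2 pi, in (0, 2 pi] *)
Definition posrep (phi : R) : R :=
  phi - (Num.floor (phi / (2 * pi)))%:~R * (2 * pi) + 2 * pi.

(* f_m(phi): activate the empty group G_m with int u dt = r * phi
   (phi real, replaced by its positive representative mod 2 pi). *)
Definition f_m (r : R) (phi : R) (st : state) : state :=
  activate r (fun _ => false) (r * posrep phi) st.

Definition h_eff (a : 'I_n -> bool) (phi : R) (st : state) : state :=
  State (sx st) (sy st) (fun j => if a j then sth st j else sth st j + phi).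

End Robots.

(* Rotation-only operations, for k = m-1 non-empty groups G_1..G_k
   (indexed by 'I_k) plus the empty group G_m. *)
Inductive rop (R : Type) (k : nat) :=
  | Hop of 'I_k & R
  | Fop of R.

Section Ops.
Variables (R : realType) (n k : nat) (r : R) (alpha : 'I_k -> 'I_n -> bool).

Definition apply_rop (o : rop R k) (st : state R n) : state R n :=
  match o with
  | Hop i phi => h_eff (alpha i) phi st
  | Fop phi => f_m r phi st
  end.

Definition run (ops : seq (rop R k)) (st : state R n) : state R n :=
  foldl (fun s o => apply_rop o s) st ops.

(* contribution of an operation to the coordinate i of u (i : 'I_m, m = k+1,
   the last index ord_max corresponding to f_m) *)
Definition contrib (o : rop R k) (i : 'I_k.+1) : R :=
  match o, unlift ord_max i with
  | Hop i' phi, Some i'' => if i' == i'' then phi else 0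
  | Fop phi, None => phi
  | _, _ => 0
  end.

Definition uvec (ops : seq (rop R k)) : 'cV[R]_k.+1 :=
  \col_i \sum_(o <- ops) contrib o i.

Definition Amat : 'M[R]_(n, k.+1) :=
  \matrix_(j, i) match unlift ord_max i with
                 | Some i' => 1 - (alpha i' j)%:R
                 | None => 1
                 end.

End Ops.

From HB Require Import structures.
From mathcomp Require Import all_boot all_order all_algebra.
From mathcomp Require Import all_classical all_reals all_analysis.
From mathcomp Require Import ring lra zify.
Import Order.TTheory GRing.Theory Num.Theory.
Local Open Scope ring_scope.

(* Every rotation-only operation fixes all positions and turns each robot by
   either its argument or 0, so a composition turns robot j by (A u)_j modulo
   2 pi.  For three distinct robots the rows of A are independent: the last
   column forces a + b + c = 0 on a vanishing combination, and a group
   separating two of the robots then kills one of their coefficients.  Hence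
   any three targets are met by some u, realised by applying each operation
   once.  For more than m robots the integer rows of A admit a nonzero integer
   relation w; every reachable change d satisfies w . d = 0 mod 2 pi, so a
   target with w . d = pi is unreachable. *)

Section EqMod2pi.
Context {R : realType}.
Implicit Types a b c d phi : R.

Lemma eqmod2pi_refl a : eqmod2pi a a.
Proof. by exists 0; rewrite mul0r addr0. Qed.

Lemma eqmod2pi_sym a b : eqmod2pi a b -> eqmod2pi b a.
Proof. by case=> z ->; exists (- z); rewrite intrN mulNr addrK. Qed.

Lemma eqmod2pi_trans a b c : eqmod2pi a b -> eqmod2pi b c -> eqmod2pi a c.
Proof. by case=> z1 -> [z2 ->]; exists (z2 + z1); rewrite intrD; ring. Qed.

Lemma eqmod2piD a b c d :
  eqmod2pi a b -> eqmod2pi c d -> eqmod2pi (a + c) (b + d).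
Proof. by case=> z1 -> [z2 ->]; exists (z1 + z2); rewrite intrD; ring. Qed.

Lemma eqmod2piMz (z : int) a b :
  eqmod2pi a b -> eqmod2pi (z%:~R * a) (z%:~R * b).
Proof. by case=> z1 ->; exists (z * z1); rewrite intrM; ring. Qed.

Lemma eqmod2pi_sum (I : finType) (F G : I -> R) :
  (forall i, eqmod2pi (F i) (G i)) -> eqmod2pi (\sum_i F i) (\sum_i G i).
Proof.
move=> FG; apply: (big_ind2 (@eqmod2pi R)) => //; first exact: eqmod2pi_refl.
by move=> *; apply: eqmod2piD.
Qed.

Lemma eqmod2pi_subLR a b c : eqmod2pi (a - b) c <-> eqmod2pi a (b + c).
Proof.
split=> -[z e]; exists z; first by rewrite -[a](subrK b) e; ring.
by rewrite e; ring.
Qed.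

Lemma eqmod2pi_posrep phi : eqmod2pi (posrep phi) phi.
Proof.
exists (1 - Num.floor (phi / (2 * pi))); rewrite /posrep intrB; ring.
Qed.

Lemma not_eqmod2pi_pi0 : ~ eqmod2pi (pi : R) 0.
Proof.
case=> z; rewrite add0r => e.
have pi_neq0 : pi != 0 :> R by rewrite gt_eqF // pi_gt0.
have : (1 : R) = (2 * z)%:~R.
  by apply: (mulIf pi_neq0); rewrite intrM mul1r {1}e; ring.
rewrite -[1 : R]/(1%:~R) => /intr_inj; lia.
Qed.
End EqMod2pi.

Lemma sum_ord_max_lift {V : nmodType} {k : nat} (F : 'I_k.+1 -> V) :
  \sum_i F i = \sum_(i < k) F (lift ord_max i) + F ord_max.
Proof.
rewrite big_ord_recr /=; congr (_ + _); apply: eq_bigr => i _.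
by congr F; apply: val_inj; rewrite /= /bump leqNgt ltn_ord.
Qed.

Section RotationOps.
Context {R : realType} {n k : nat} {r : R} (alpha : 'I_k -> 'I_n -> bool).
Hypothesis r_neq0 : r != 0.

Definition rop_turn (o : rop R k) (j : 'I_n) : R :=
  match o with Hop i phi => if alpha i j then 0 else phi | Fop phi => phi end.

Lemma apply_rop_sx o st : sx (apply_rop r alpha o st) = sx st.
Proof. by case: o => [i phi|phi] //=; apply: funext => j /=; rewrite !mul0r addr0. Qed.

Lemma apply_rop_sy o st : sy (apply_rop r alpha o st) = sy st.
Proof. by case: o => [i phi|phi] //=; apply: funext => j /=; rewrite !mul0r addr0. Qed.

Lemma apply_rop_sth o st j :
  eqmod2pi (sth (apply_rop r alpha o st) j) (sth st j + rop_turn o j).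
Proof.
case: o => [i phi|phi] /=.
  by case: (alpha i j); rewrite ?addr0; apply: eqmod2pi_refl.
rewrite subr0 mul1r mulrC mulKf //.
by apply: eqmod2piD; [apply: eqmod2pi_refl | apply: eqmod2pi_posrep].
Qed.

Lemma run_cons o ops st :
  run r alpha (o :: ops) st = run r alpha ops (apply_rop r alpha o st).
Proof. by []. Qed.

Lemma run_sx ops st : sx (run r alpha ops st) = sx st.
Proof. by elim: ops st => [|o ops IH] st //; rewrite run_cons IH apply_rop_sx. Qed.

Lemma run_sy ops st : sy (run r alpha ops st) = sy st.
Proof. by elim: ops st => [|o ops IH] st //; rewrite run_cons IH apply_rop_sy. Qed.

Lemma run_sth ops st j :
  eqmod2pi (sth (run r alpha ops st) j) (sth st j + \sum_(o <- ops) rop_turn o j).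
Proof.
elim: ops st => [|o ops IH] st; first by rewrite big_nil addr0; apply: eqmod2pi_refl.
rewrite run_cons big_cons addrA; apply: eqmod2pi_trans (IH _) _.
by apply: eqmod2piD; [apply: apply_rop_sth | apply: eqmod2pi_refl].
Qed.

Lemma Amat_ord_max j : Amat R alpha j ord_max = 1.
Proof. by rewrite mxE unlift_none. Qed.

Lemma Amat_lift j i : Amat R alpha j (lift ord_max i) = 1 - (alpha i j)%:R.
Proof. by rewrite mxE liftK. Qed.

Lemma Amat_contrib o j : \sum_i Amat R alpha j i * contrib o i = rop_turn o j.
Proof.
rewrite sum_ord_max_lift Amat_ord_max mul1r /contrib unlift_none.
under eq_bigr => i _ do rewrite Amat_lift liftK.
case: o => [i' phi|phi] /=; last by rewrite big1 ?add0r // => i _; rewrite mulr0.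
rewrite addr0 (bigD1 i') //= eqxx big1 ?addr0; last first.
  by move=> i; rewrite eq_sym => /negbTE ->; rewrite mulr0.
by case: (alpha i' j); rewrite /= ?subrr ?mul0r ?subr0 ?mul1r.
Qed.

Lemma mulmx_Amat_uvec ops j :
  (Amat R alpha *m uvec ops) j 0 = \sum_(o <- ops) rop_turn o j.
Proof.
rewrite mxE; under eq_bigr => i _ do rewrite [X in _ * X]mxE mulr_sumr.
by rewrite exchange_big; apply: eq_bigr => o _; apply: Amat_contrib.
Qed.

Lemma run_rotation ops st :
  [/\ sx (run r alpha ops st) = sx st, sy (run r alpha ops st) = sy st &
      forall j, eqmod2pi (sth (run r alpha ops st) j - sth st j)
                         ((Amat R alpha *m uvec ops) j 0)].
Proof.
split; [exact: run_sx | exact: run_sy | move=> j].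
by rewrite mulmx_Amat_uvec eqmod2pi_subLR; apply: run_sth.
Qed.

End RotationOps.

Definition ops_of_col {R : Type} {k : nat} (u : 'cV[R]_k.+1) : seq (rop R k) :=
  rcons [seq Hop i (u (lift ord_max i) 0) | i : 'I_k] (@Fop R k (u ord_max 0)).

Lemma uvec_ops_of_col {R : realType} {k : nat} (u : 'cV[R]_k.+1) :
  uvec (ops_of_col u) = u.
Proof.
apply/colP => i; rewrite mxE /ops_of_col -cats1 big_cat big_map big_seq1 /=.
case: (unliftP ord_max i) => [i' ->|->]; rewrite /contrib ?liftK ?unlift_none.
  rewrite addr0 -big_mkcond /=.
  by rewrite big_enum_cond /= big_pred1_eq.
by rewrite big1 ?add0r.
Qed.

Lemma rowsub_free_solve {F : fieldType} {m p q} (A : 'M[F]_(m, q))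
    (f : 'I_p -> 'I_m) (d : 'cV[F]_p) :
  row_free (rowsub f A) -> exists u : 'cV[F]_q, rowsub f (A *m u) = d.
Proof.
case/row_freeP=> B AB; exists (B *m d).
by rewrite -mul_rowsub_mx mulmxA AB mul1mx.
Qed.

Lemma bool_comb3_sep (R : realDomainType) (a b c : R) (x y z : bool) :
  a + b + c = 0 -> a * (1 - x%:R) + b * (1 - y%:R) + c * (1 - z%:R) = 0 ->
  x <> y -> a = 0 \/ b = 0.
Proof.
move=> abc; case: x; case: y; case: z => //= e _;
  rewrite ?subrr ?subr0 ?mulr0 ?mulr1 in e; first [left; lra | right; lra].
Qed.

Section ThreeRobots.
Context {R : realType} {n k : nat} (alpha : 'I_k -> 'I_n -> bool).
Hypothesis alpha_sep : forall j1 j2 : 'I_n, j1 <> j2 -> exists i, alpha i j1 <> alpha i j2.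
Context {j1 j2 j3 : 'I_n}.
Hypotheses (j12 : j1 <> j2) (j13 : j1 <> j3) (j23 : j2 <> j3).

Lemma Amat_comb3_eq0 (a b c : R) :
  (forall i, a * Amat R alpha j1 i + b * Amat R alpha j2 i + c * Amat R alpha j3 i = 0) ->
  [/\ a = 0, b = 0 & c = 0].
Proof.
move=> comb; have := comb ord_max; rewrite !Amat_ord_max !mulr1 => abc.
have sep_at jx jy jz ax ay az : jx <> jy ->
    ax + ay + az = 0 ->
    (forall i, ax * Amat R alpha jx i + ay * Amat R alpha jy i + az * Amat R alpha jz i = 0) ->
    ax = 0 \/ ay = 0.
  move=> /alpha_sep[i sep] s e; have := e (lift ord_max i); rewrite !Amat_lift => ei.
  exact: bool_comb3_sep s ei sep.
have sep13 := sep_at _ _ j2 a c b j13 ltac:(lra) ltac:(move=> i; have := comb i; lra).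
have sep23 := sep_at _ _ j1 b c a j23 ltac:(lra) ltac:(move=> i; have := comb i; lra).
by case: (sep_at _ _ _ _ _ _ j12 abc comb) => ?; [case: sep23 | case: sep13] => ?;
  split; lra.
Qed.

Lemma Amat_rows3_free : row_free (rowsub (tnth [tuple j1; j2; j3]) (Amat R alpha)).
Proof.
apply: inj_row_free => v vA0.
have [v0 v1 v2] : [/\ v 0 ord0 = 0, v 0 (lift ord0 ord0) = 0
                    & v 0 (lift ord0 (lift ord0 ord0)) = 0].
  apply: Amat_comb3_eq0 => i; have := congr1 (fun M : 'M[R]_(1, k.+1) => M 0 i) vA0.
  by rewrite !mxE !big_ord_recl big_ord0 !mxE /= addr0 addrA.
apply/rowP => -[[|[|[|s]]] s3] //; rewrite mxE.
- by rewrite -v0; congr (v 0 _); apply: val_inj.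
- by rewrite -v1; congr (v 0 _); apply: val_inj.
- by rewrite -v2; congr (v 0 _); apply: val_inj.
Qed.

Lemma three_orientations_reachable {r : R} (r_neq0 : r != 0) (st : state R n)
    (b1 b2 b3 : R) :
  exists ops : seq (rop R k),
    [/\ eqmod2pi (sth (run r alpha ops st) j1) b1,
        eqmod2pi (sth (run r alpha ops st) j2) b2
      & eqmod2pi (sth (run r alpha ops st) j3) b3].
Proof.
pose js := [tuple j1; j2; j3]; pose bs := [tuple b1; b2; b3].
pose d : 'cV[R]_3 := \col_s (tnth bs s - sth st (tnth js s)).
have [u Au] := rowsub_free_solve _ _ d Amat_rows3_free.
exists (ops_of_col u).
have [_ _ rot] := run_rotation alpha r_neq0 (ops_of_col u) st.
have reach s : eqmod2pi (sth (run r alpha (ops_of_col u) st) (tnth js s)) (tnth bs s).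
  have := rot (tnth js s); rewrite uvec_ops_of_col eqmod2pi_subLR.
  have := congr1 (fun M : 'cV[R]_3 => M s 0) Au; rewrite !mxE => ->.
  by rewrite addrC subrK.
exact: And3 (reach ord0) (reach (lift ord0 ord0)) (reach (lift ord0 (lift ord0 ord0))).
Qed.

End ThreeRobots.

Lemma rV_rat_scale_int {p} (v : 'rV[rat]_p) :
  exists (D : int) (w : 'rV[int]_p), D != 0 /\ map_mx intr w = D%:~R *: v.
Proof.
pose D := \prod_t denq (v 0 t).
exists D, (\row_t (numq (v 0 t) * \prod_(t' | t' != t) denq (v 0 t'))); split.
  by rewrite prodf_seq_neq0; apply/allP => t _; rewrite denq_neq0.
apply/rowP => t; rewrite !mxE intrM numqE -mulrA -intrM.
by rewrite [RHS]mulrC /D [X in _ = _ * X%:~R](bigD1 t).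
Qed.

Lemma int_left_kernel {p q} (B : 'M[int]_(p, q)) :
  (q < p)%N -> exists2 w : 'rV[int]_p, w != 0 & w *m B = 0.
Proof.
move=> qp; have : ~~ row_free (map_mx (intr : int -> rat) B).
  by rewrite /row_free neq_ltn (leq_ltn_trans (rank_leq_col _)).
rewrite -kermx_eq0 => /rowV0Pn[v /sub_kermxP vB v0].
have [D [w [D0 wv]]] := rV_rat_scale_int v.
exists w.
  by apply: contraNneq v0 => w0; move: wv; rewrite w0 map_mx0 => /esym/eqP;
     rewrite scaler_eq0 intr_eq0 (negbTE D0).
have : map_mx (intr : int -> rat) (w *m B) = 0.
  by rewrite map_mxM wv -scalemxAl vB scaler0.
by move=> /rowP wB0; apply/rowP => i; have /eqP := wB0 i; rewrite !mxE intr_eq0 => /eqP.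
Qed.

Lemma intmx_mod2pi_not_onto {R : realType} {m q} (B : 'M[int]_(m, q))
    (S : {set 'I_m}) :
  (q < #|S|)%N ->
  exists d : 'I_m -> R, ~ exists u : 'cV[R]_q,
    forall j, j \in S -> eqmod2pi (d j) ((map_mx intr B *m u) j 0).
Proof.
move=> qS; pose e : 'I_#|S| -> 'I_m := enum_val.
have [w /rV0Pn[t0 wt0] wB] := int_left_kernel (rowsub e B) qS.
pose d j : R := if j == e t0 then pi / (w 0 t0)%:~R else 0.
exists d => -[u du].
have : eqmod2pi (\sum_t (w 0 t)%:~R * d (e t))
                (\sum_t (w 0 t)%:~R * (map_mx intr B *m u) (e t) 0).
  by apply: eqmod2pi_sum => t; apply/eqmod2piMz/du/enum_valP.
have -> : \sum_t (w 0 t)%:~R * d (e t) = pi.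
  rewrite (bigD1 t0) //= /d eqxx big1 ?addr0; last first.
    by move=> t /negbTE; rewrite (inj_eq enum_val_inj) => ->; rewrite mulr0.
  by rewrite mulrC divfK // intr_eq0.
have -> : \sum_t (w 0 t)%:~R * (map_mx intr B *m u) (e t) 0 = 0.
  transitivity ((map_mx intr w *m rowsub e (map_mx intr B *m u)) 0 0).
    by rewrite mxE; apply: eq_bigr => t _; rewrite !mxE.
  by rewrite -mul_rowsub_mx mulmxA -map_mxsub -map_mxM wB map_mx0 mul0mx mxE.
exact: not_eqmod2pi_pi0.
Qed.

Definition Amat_int {n k : nat} (alpha : 'I_k -> 'I_n -> bool) : 'M[int]_(n, k.+1) :=
  \matrix_(j, i) match unlift ord_max i with
                 | Some i' => 1 - (alpha i' j)%:R
                 | None => 1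
                 end.

Lemma Amat_map_int {R : realType} {n k : nat} (alpha : 'I_k -> 'I_n -> bool) :
  Amat R alpha = map_mx intr (Amat_int alpha).
Proof.
apply/matrixP => j i; rewrite !mxE; case: unlift => [i'|] //=.
by case: (alpha i' j); rewrite /= ?subrr ?subr0.
Qed.

Theorem mainTheorem4 (R : realType) (n k : nat) (r : R)
    (alpha : 'I_k -> 'I_n -> bool)
    (hr : 0 < r) (hn : (3 <= n)%N)
    (hdistinct : forall j1 j2 : 'I_n, j1 <> j2 -> exists i, alpha i j1 <> alpha i j2)
    (hnot0 : forall j : 'I_n, exists i, alpha i j = true)
    (hnot1 : forall j : 'I_n, exists i, alpha i j = false) :
  (* (a) *)
  (forall (ops : seq (rop R k)) (st : state R n),
      sx (run r alpha ops st) = sx st /\ sy (run r alpha ops st) = sy st /\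
      forall j : 'I_n,
        eqmod2pi (sth (run r alpha ops st) j - sth st j)
                 ((Amat R alpha *m uvec ops) j 0)) /\
  (* (b) *)
  (forall (st : state R n) (j1 j2 j3 : 'I_n) (b1 b2 b3 : R),
      j1 <> j2 -> j1 <> j3 -> j2 <> j3 ->
      exists ops : seq (rop R k),
        eqmod2pi (sth (run r alpha ops st) j1) b1 /\
        eqmod2pi (sth (run r alpha ops st) j2) b2 /\
        eqmod2pi (sth (run r alpha ops st) j3) b3) /\
  (* (c) *)
  ((\rank (Amat R alpha) <= k.+1)%N /\
   forall (S : {set 'I_n}) (st : state R n), (k.+1 < #|S|)%N ->
     exists beta : 'I_n -> R,
       ~ exists ops : seq (rop R k),
           forall j, j \in S -> eqmod2pi (sth (run r alpha ops st) j) (beta j)).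
Proof.
(* hn only makes (b) non-vacuous; hnot0 and hnot1 serve in the paper to
   construct the sequences h_i, which are given here by their net effect. *)
have r_neq0 : r != 0 by rewrite gt_eqF.
split; [|split; [|split]].
- by move=> ops st; have [? ? ?] := run_rotation alpha r_neq0 ops st.
- move=> st j1 j2 j3 b1 b2 b3 j12 j13 j23.
  have [ops [? ? ?]] := three_orientations_reachable alpha hdistinct j12 j13 j23 r_neq0 st b1 b2 b3.
  by exists ops.
- exact: rank_leq_col.
move=> S st kS; have [d not_onto] := intmx_mod2pi_not_onto (R := R) (Amat_int alpha) S kS.
exists (fun j => sth st j + d j) => -[ops reach]; apply: not_onto.
exists (uvec ops) => j jS; rewrite -Amat_map_int.
have [_ _ rot] := run_rotation alpha r_neq0 ops st.
apply: eqmod2pi_trans (rot j); apply: eqmod2pi_sym.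
by rewrite eqmod2pi_subLR; apply: reach.
Qed.
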